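(* (Soundness.) Let $(C_1;\pi_1)$ and $(C_2;\pi_2)$ be constrained clauses and let $(R;\pi_R)$ be the conclusion of an SDC-Resolution inference with premises $(C_1;\pi_1)$ and $(C_2;\pi_2)$. Then every Herbrand interpretation satisfying both $(C_1;\pi_1)$ and $(C_2;\pi_2)$ satisfies $(R;\pi_R)$. Likewise, if $(R;\pi_R)$ is the conclusion of an SDC-Factoring inference with premise $(C;\pi)$, then every Herbrand interpretation satisfying $(C;\pi)$ satisfies $(R;\pi_R)$.
   Context: Clauses: a clause is written $\Gamma\rightarrow\Delta$ where $\Gamma,\Delta$ are finite multisets of atoms ($\Gamma$ the negative literals, $\Delta$ the positive literals); $\Gamma_1,\Gamma_2$ denotes multiset union. All predicates relevant here are monadic. Straight terms: a variable and a constant are straight; $f(s_1,\dots,s_n)$ is straight if $s_1,\dots,s_n$ are pairwise distinct variables except for at most one argument $s_i$ that is a straight term. The depth of variables and constants is $0$, depth$(f(s_1,\dots,s_n))=1+\max_i$ depth$(s_i)$. A term is shallow if its depth is at most 1, linear if no variable occurs twice in it. Straight dismatching constraints (SDCs): an atomic SDC is $t\neq s$ with $s,t$ variable-disjoint terms and $s$ straight; an SDC $\pi=\bigwedge_{i\in I} t_i\neq s_i$ is a finite conjunction of atomic SDCs ($\top$ = empty conjunction, $\bot$ = false). For a substitution $\sigma$, $\pi\sigma=\bigwedge_i t_i\sigma\neq s_i$. A solution of $\pi$ is a grounding substitution $\delta$ such that for no $i$ is $t_i\delta$ an instance of $s_i$ (i.e. there is no $\tau$ with $t_i\delta=s_i\tau$);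 $\pi$ is solvable if it has a solution. The normalization $\mathrm{norm}(\pi)$ is the normal form of $\pi$ under the rewrite rules: $\pi\wedge f(t_1,\dots,t_n)\neq y \to \bot$; $\pi\wedge f(t_1,\dots,t_n)\neq f(y_1,\dots,y_n)\to\bot$ ($y_i$ variables); $\pi\wedge f(t_1,\dots,t_n)\neq f(s_1,\dots,s_n)\to \pi\wedge t_i\neq s_i$ if $s_i$ is complex (non-variable); $\pi\wedge f(t_1,\dots,t_n)\neq g(s_1,\dots,s_m)\to\pi$ for $f\neq g$; $\pi\wedge x\neq s\wedge x\neq s\sigma\to\pi\wedge x\neq s$. Constrained clauses: a pair $(C;\pi)$ of a clause and an SDC; $(C;\pi)\sigma=(C\sigma;\pi\sigma)$. Its ground instances are the clauses $C\delta$ with $\delta$ a solution of $\pi$ grounding all variables of $C$ and of the left-hand sides of $\pi$. A Herbrand interpretation $I$ is a set of ground atoms; $I$ satisfies a ground clause $\Gamma\rightarrow\Delta$ if $\Delta\cap I\neq\emptyset$ or $\Gamma\not\subseteq I$; $I$ satisfies $(C;\pi)$ if it satisfies all its ground instances. MSL(SDC) clauses: $(C;\pi)$ with $\pi$ an SDC and $C=\Gamma\rightarrow\Delta$ an MSL clause, i.e. (i) all argument terms of atoms in $\Delta$ are shallow, every atom in $\Delta$ is linear and distinct atoms of $\Delta$ share no variables, (ii) all predicates are monadic, (iii) no equations occur in $\Delta$, (iv) no equations occur in $\Gamma$, or $\Gamma=\{s\approx t\}$ with $\Delta$ empty and $s,t$ not unifiable. Ordering: $\prec$ is an atom ordering (irreflexive,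 well-founded, total on ground atoms), lifted to literals by representing $A$ as $\{A\}$ and $\neg A$ as $\{A,A\}$ and comparing by multiset extension, and to ground clauses by the multiset extension of the literal ordering. Standing assumption: for ground atoms $Q(s)$ and $P(t)$ where $s$ is a proper subterm of $t$, the literal $\neg Q(s)$ is not greater than the literal $P(t)$. A literal $A$ is maximal [strictly maximal] in $(C\vee A;\pi)$ if there is a solution $\delta$ of $\pi$ such that $B\delta\preceq A\delta$ [$B\delta\prec A\delta$] for all literals $B$ of $C$. Selection function: for an MSL(SDC) clause $(S_1(t_1),\dots,S_n(t_n)\rightarrow P_1(s_1),\dots,P_m(s_m);\pi)$, $\mathrm{sel}(C)$ consists of those $S_i(t_i)$ such that (1) $t_i$ is not a variable, or (2) $t_1,\dots,t_n$ are all variables and $t_i\notin\mathrm{vars}(s_1,\dots,s_m)$, or (3) $\{t_1,\dots,t_n\}\subseteq\mathrm{vars}(s_1,\dots,s_m)$ and $s_j=t_i$ for some $j$. SDC-Resolution: from variable-disjoint $(\Gamma_1\rightarrow\Delta_1,A;\pi_1)$ and $(\Gamma_2,B\rightarrow\Delta_2;\pi_2)$ infer $((\Gamma_1,\Gamma_2\rightarrow\Delta_1,\Delta_2)\sigma;\mathrm{norm}((\pi_1\wedge\pi_2)\sigma))$ provided: $\sigma=\mathrm{mgu}(A,B)$; $\mathrm{norm}((\pi_1\wedge\pi_2)\sigma)$ is solvable; $A\sigma$ is strictly maximal in $(\Gamma_1\rightarrow\Delta_1,A;\pi_1)\sigma$ and $\mathrm{sel}(\Gamma_1\rightarrow\Delta_1,A)=\emptyset$;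 and either $B\in\mathrm{sel}(\Gamma_2,B\rightarrow\Delta_2)$, or $\mathrm{sel}(\Gamma_2,B\rightarrow\Delta_2)=\emptyset$ and $\neg B\sigma$ is maximal in $(\Gamma_2,B\rightarrow\Delta_2;\pi_2)\sigma$. SDC-Factoring: from $(\Gamma\rightarrow\Delta,A,B;\pi)$ infer $((\Gamma\rightarrow\Delta,A)\sigma;\mathrm{norm}(\pi\sigma))$ provided $\sigma=\mathrm{mgu}(A,B)$, $\mathrm{sel}(\Gamma\rightarrow\Delta,A,B)=\emptyset$, $A\sigma$ is maximal in $(\Gamma\rightarrow\Delta,A,B;\pi)\sigma$, and $\mathrm{norm}(\pi\sigma)$ is solvable. *)

From Stdlib Require Import List Permutation Relations.
Import ListNotations.

Section SDC.

Variable F : Type.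
Variable arity : F -> nat.
Variable Pred : Type.

Inductive term : Type :=
| Var (x : nat)
| Fn (f : F) (args : list term).

Inductive wf : term -> Prop :=
| wf_var x : wf (Var x)
| wf_fn f ts : length ts = arity f -> Forall wf ts -> wf (Fn f ts).

Inductive occurs (x : nat) : term -> Prop :=
| occ_var : occurs x (Var x)
| occ_fn f ts u : In u ts -> occurs x u -> occurs x (Fn f ts).

Definition ground (t : term) : Prop := forall x, ~ occurs x t.

Inductive proper_subterm : term -> term -> Prop :=
| psub_arg s f ts : In s ts -> proper_subterm s (Fn f ts)
| psub_trans s f ts u : In u ts -> proper_subterm s u -> proper_subterm s (Fn f ts).

Definition subst_t := nat -> term.

Fixpoint subst (sg : subst_t) (t : term) : term :=
  match t with
  | Var x => sg x
  | Fn f ts => Fn f (map (subst sg) ts)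
  end.

Inductive straight : term -> Prop :=
| st_var x : straight (Var x)
| st_vars f xs : NoDup xs -> straight (Fn f (map Var xs))
| st_one f xs1 u xs2 : NoDup (xs1 ++ xs2) -> straight u ->
    straight (Fn f (map Var xs1 ++ u :: map Var xs2)).

Definition atom : Type := (Pred * term)%type.
Definition subst_atom (sg : subst_t) (a : atom) : atom := (fst a, subst sg (snd a)).
Definition occurs_atom (x : nat) (a : atom) : Prop := occurs x (snd a).

(* Clauses Gamma -> Delta, multisets represented by lists (up to permutation). *)
Definition clause : Type := (list atom * list atom)%type.
Definition subst_clause (sg : subst_t) (C : clause) : clause :=
  (map (subst_atom sg) (fst C), map (subst_atom sg) (snd C)).
Definition occurs_clause (x : nat) (C : clause) : Prop :=
  exists a, (In a (fst C) \/ In a (snd C)) /\ occurs_atom x a.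

(* Literals and their ordering: A as {A}, not A as {A,A}, multiset extension. *)
Inductive lit : Type := Pos (a : atom) | Neg (a : atom).
Definition subst_lit (sg : subst_t) (L : lit) : lit :=
  match L with Pos a => Pos (subst_atom sg a) | Neg a => Neg (subst_atom sg a) end.
Definition lit_atom (L : lit) : atom := match L with Pos a => a | Neg a => a end.
Definition lit_ms (L : lit) : list atom := match L with Pos a => [a] | Neg a => [a; a] end.

Definition mul_lt {A : Type} (lt : A -> A -> Prop) (M N : list A) : Prop :=
  exists X Y Z, Permutation M (Z ++ Y) /\ Permutation N (Z ++ X) /\ X <> [] /\
    forall y, In y Y -> exists x, In x X /\ lt y x.

Definition lit_lt (lt : atom -> atom -> Prop) (K L : lit) : Prop :=
  mul_lt lt (lit_ms K) (lit_ms L).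
Definition lit_le (lt : atom -> atom -> Prop) (K L : lit) : Prop :=
  lit_lt lt K L \/ K = L.

Definition ground_atom (a : atom) : Prop := ground (snd a) /\ wf (snd a).

(* An atom ordering: irreflexive, (transitive), well-founded, total on
   ground atoms, plus the standing assumption of the paper. *)
Definition atom_ordering (lt : atom -> atom -> Prop) : Prop :=
  (forall a, ~ lt a a) /\
  (forall a b c, lt a b -> lt b c -> lt a c) /\
  well_founded lt /\
  (forall a b, ground_atom a -> ground_atom b -> a <> b -> lt a b \/ lt b a) /\
  (forall Q s P t, ground s -> wf s -> ground t -> wf t -> proper_subterm s t ->
      ~ lit_lt lt (Pos (P, t)) (Neg (Q, s))).

(* SDCs: Bot, or a finite conjunction of atomic constraints t <> s,
   represented by the pair (t, s); the empty conjunction is Top. *)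
Inductive sdc : Type := Bot | Conj (l : list (term * term)).

Definition is_sdc (pi : sdc) : Prop :=
  match pi with
  | Bot => True
  | Conj l => forall t s, In (t, s) l ->
      straight s /\ (forall x, occurs x t -> ~ occurs x s)
  end.

Definition sdc_subst (sg : subst_t) (pi : sdc) : sdc :=
  match pi with
  | Bot => Bot
  | Conj l => Conj (map (fun p => (subst sg (fst p), snd p)) l)
  end.

Definition sdc_and (p1 p2 : sdc) : sdc :=
  match p1, p2 with
  | Conj l1, Conj l2 => Conj (l1 ++ l2)
  | _, _ => Bot
  end.

Definition occurs_lhs (x : nat) (pi : sdc) : Prop :=
  match pi with
  | Bot => False
  | Conj l => exists t s, In (t, s) l /\ occurs x t
  end.

Definition grounds_var (dl : subst_t) (x : nat) : Prop :=
  ground (dl x) /\ wf (dl x).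

Definition is_instance (t s : term) : Prop := exists tau, t = subst tau s.

Definition solution (pi : sdc) (dl : subst_t) : Prop :=
  match pi with
  | Bot => False
  | Conj l =>
      (forall x, occurs_lhs x pi -> grounds_var dl x) /\
      forall t s, In (t, s) l -> ~ is_instance (subst dl t) s
  end.

Definition solvable (pi : sdc) : Prop := exists dl, solution pi dl.

(* Rewrite rules of normalization (conjunction taken modulo permutation). *)
Inductive norm_step : sdc -> sdc -> Prop :=
| ns_var l f ts y rho :
    Permutation l ((Fn f ts, Var y) :: rho) -> norm_step (Conj l) Bot
| ns_vars l f ts ys rho :
    length ys = length ts ->
    Permutation l ((Fn f ts, Fn f (map Var ys)) :: rho) -> norm_step (Conj l) Bot
| ns_dec l f ts ss rho i t0 s0 :
    length ss = length ts -> i < length ss ->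
    (exists g us, nth i ss s0 = Fn g us) ->
    Permutation l ((Fn f ts, Fn f ss) :: rho) ->
    norm_step (Conj l) (Conj ((nth i ts t0, nth i ss s0) :: rho))
| ns_clash l f ts g ss rho :
    f <> g ->
    Permutation l ((Fn f ts, Fn g ss) :: rho) -> norm_step (Conj l) (Conj rho)
| ns_inst l x s sg rho :
    Permutation l ((Var x, s) :: (Var x, subst sg s) :: rho) ->
    norm_step (Conj l) (Conj ((Var x, s) :: rho)).

Definition norm_of (pi pi' : sdc) : Prop :=
  clos_refl_trans sdc norm_step pi pi' /\ ~ (exists pi'', norm_step pi' pi'').

Definition cclause_wf (C : clause) (pi : sdc) : Prop :=
  is_sdc pi /\
  (forall a, In a (fst C) \/ In a (snd C) -> wf (snd a)) /\
  (match pi with Bot => True | Conj l => forall t s, In (t, s) l -> wf t /\ wf s end).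

Definition var_disjoint (C1 : clause) (p1 : sdc) (C2 : clause) (p2 : sdc) : Prop :=
  forall x, (occurs_clause x C1 \/ occurs_lhs x p1) ->
            ~ (occurs_clause x C2 \/ occurs_lhs x p2).

Definition interp : Type := atom -> Prop.

Definition sat_ground (I : interp) (C : clause) : Prop :=
  (exists a, In a (snd C) /\ I a) \/ ~ (forall a, In a (fst C) -> I a).

Definition satisfies (I : interp) (C : clause) (pi : sdc) : Prop :=
  forall dl, solution pi dl -> (forall x, occurs_clause x C -> grounds_var dl x) ->
    sat_ground I (subst_clause dl C).

Definition is_mgu (sg : subst_t) (a b : atom) : Prop :=
  subst_atom sg a = subst_atom sg b /\
  forall th, subst_atom th a = subst_atom th b ->
    exists tau, forall x, th x = subst tau (sg x).

(* L is [strictly] maximal in (C v L; pi), where others = literals of C *)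
Definition maximal_in (lt : atom -> atom -> Prop) (strict : bool)
    (L : lit) (others : list lit) (pi : sdc) : Prop :=
  exists dl, solution pi dl /\
    (forall x, (occurs_atom x (lit_atom L) \/
                exists K, In K others /\ occurs_atom x (lit_atom K)) -> grounds_var dl x) /\
    forall K, In K others ->
      if strict then lit_lt lt (subst_lit dl K) (subst_lit dl L)
      else lit_le lt (subst_lit dl K) (subst_lit dl L).

Definition lits_of (G D : list atom) : list lit := map Neg G ++ map Pos D.

Definition in_sel (C : clause) (a : atom) : Prop :=
  In a (fst C) /\
  ( (exists f ts, snd a = Fn f ts)
  \/ ((forall b, In b (fst C) -> exists y, snd b = Var y) /\
      exists x, snd a = Var x /\ ~ (exists b, In b (snd C) /\ occurs_atom x b))
  \/ ((forall b, In b (fst C) -> exists y, snd b = Var y /\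
                   exists c, In c (snd C) /\ occurs_atom y c) /\
      exists c, In c (snd C) /\ snd c = snd a) ).

Definition sel_empty (C : clause) : Prop := forall a, ~ in_sel C a.

Definition sdc_resolution (lt : atom -> atom -> Prop)
    (C1 : clause) (p1 : sdc) (C2 : clause) (p2 : sdc) (R : clause) (pR : sdc) : Prop :=
  exists G1 D1 A G2 D2 B sg,
    var_disjoint C1 p1 C2 p2 /\
    Permutation (fst C1) G1 /\ Permutation (snd C1) (A :: D1) /\
    Permutation (fst C2) (B :: G2) /\ Permutation (snd C2) D2 /\
    is_mgu sg A B /\
    Permutation (fst R) (map (subst_atom sg) (G1 ++ G2)) /\
    Permutation (snd R) (map (subst_atom sg) (D1 ++ D2)) /\
    norm_of (sdc_subst sg (sdc_and p1 p2)) pR /\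
    solvable pR /\
    maximal_in lt true (Pos (subst_atom sg A))
      (lits_of (map (subst_atom sg) G1) (map (subst_atom sg) D1)) (sdc_subst sg p1) /\
    sel_empty (G1, A :: D1) /\
    ( in_sel (B :: G2, D2) B
    \/ (sel_empty (B :: G2, D2) /\
        maximal_in lt false (Neg (subst_atom sg B))
          (lits_of (map (subst_atom sg) G2) (map (subst_atom sg) D2)) (sdc_subst sg p2)) ).

Definition sdc_factoring (lt : atom -> atom -> Prop)
    (C : clause) (p : sdc) (R : clause) (pR : sdc) : Prop :=
  exists G D A B sg,
    Permutation (fst C) G /\ Permutation (snd C) (A :: B :: D) /\
    is_mgu sg A B /\
    Permutation (fst R) (map (subst_atom sg) G) /\
    Permutation (snd R) (map (subst_atom sg) (A :: D)) /\
    sel_empty (G, A :: B :: D) /\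
    maximal_in lt false (Pos (subst_atom sg A))
      (lits_of (map (subst_atom sg) G) (map (subst_atom sg) (B :: D))) (sdc_subst sg p) /\
    norm_of (sdc_subst sg p) pR /\
    solvable pR.

End SDC.

Arguments Var {F} x.
Arguments Fn {F} f args.

(* Soundness is checked on ground instances. A ground instance of the conclusion,
   given by a solution [dl] of its normalized constraint, is first completed to a
   substitution [d0] grounding every variable (using a constant of the signature).
   Every grounding solution of a normal form solves the constraint it was
   normalized from, so [d0] also solves [(pi1 /\ pi2) sg]; hence [e = d0 o sg] solves
   [pi1] and [pi2] and yields ground instances of the premises in which [A] and [B]
   become equal. Ground resolution (resp. factoring) is sound, and its conclusion
   is the original ground instance of the conclusion. *)

From Stdlib Require Import List Permutation Relations Classical ClassicalEpsilon.
Import ListNotations.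

Section Terms.

Variable F : Type.
Variable arity : F -> nat.

Definition term_nested_ind (P : term F -> Prop) (HV : forall x, P (Var x))
  (HF : forall f ts, Forall P ts -> P (Fn f ts)) : forall t, P t :=
  fix go t := match t with
  | Var x => HV x
  | Fn f ts => HF f ts ((fix go_list l : Forall P l := match l with
       | [] => @Forall_nil _ P
       | u :: l' => @Forall_cons _ P u l' (go u) (go_list l') end) ts)
  end.

Lemma subst_comp (f g : subst_t F) t :
  subst F f (subst F g t) = subst F (fun x => subst F f (g x)) t.
Proof.
  induction t as [x|h ts IH] using term_nested_ind; simpl; auto.
  f_equal. rewrite map_map. apply map_ext_in. intros u Hu.
  rewrite Forall_forall in IH. auto.
Qed.

Lemma subst_ext (f g : subst_t F) t :
  (forall x, occurs F x t -> f x = g x) -> subst F f t = subst F g t.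
Proof.
  induction t as [x|h ts IH] using term_nested_ind; intros Hfg; simpl.
  - apply Hfg. constructor.
  - f_equal. apply map_ext_in. intros u Hu. rewrite Forall_forall in IH.
    apply IH; auto. intros x Hx. apply Hfg. econstructor; eauto.
Qed.

Lemma occurs_subst (dl : subst_t F) t y :
  occurs F y (subst F dl t) -> exists x, occurs F x t /\ occurs F y (dl x).
Proof.
  induction t as [x|h ts IH] using term_nested_ind; simpl; intros Hy.
  - exists x. split; [constructor | assumption].
  - inversion Hy as [|h' ts' u Hin Hu]; subst.
    apply in_map_iff in Hin as [v [<- Hv]].
    rewrite Forall_forall in IH. destruct (IH v Hv Hu) as [x [Hx Hyx]].
    exists x. split; [econstructor; eauto | assumption].
Qed.

Lemma ground_subst (dl : subst_t F) t :
  (forall x, ground F (dl x)) -> ground F (subst F dl t).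
Proof.
  intros Hdl y Hy. destruct (occurs_subst dl t y Hy) as [x [_ Hyx]].
  exact (Hdl x y Hyx).
Qed.

Lemma wf_subst (dl : subst_t F) t :
  (forall x, wf F arity (dl x)) -> wf F arity t -> wf F arity (subst F dl t).
Proof.
  induction t as [x|h ts IH] using term_nested_ind; simpl; intros Hdl Ht; auto.
  inversion Ht as [|h' ts' Hlen Hts]; subst. constructor.
  - rewrite length_map. assumption.
  - rewrite Forall_forall in *. intros v Hv.
    apply in_map_iff in Hv as [u [<- Hu]]. auto.
Qed.

Lemma wf_subst_inv (tau : subst_t F) t :
  wf F arity (subst F tau t) -> wf F arity t.
Proof.
  induction t as [x|h ts IH] using term_nested_ind; simpl; intros Ht.
  - constructor.
  - inversion Ht as [|h' ts' Hlen Hts]; subst. constructor.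
    + rewrite length_map in Hlen. assumption.
    + rewrite Forall_forall in *. intros u Hu. apply IH; auto.
      apply Hts. apply in_map. assumption.
Qed.

Fixpoint wf_repair (t : term F) : term F :=
  match t with
  | Var x => Var x
  | Fn f ts => if Nat.eqb (length ts) (arity f) then Fn f (map wf_repair ts) else Var 0
  end.

Lemma wf_repair_wf t : wf F arity (wf_repair t).
Proof.
  induction t as [x|f ts IH] using term_nested_ind; simpl.
  - constructor.
  - destruct (PeanoNat.Nat.eqb_spec (length ts) (arity f)); constructor.
    + rewrite length_map. assumption.
    + rewrite Forall_forall in *. intros v Hv.
      apply in_map_iff in Hv as [u [<- Hu]]. auto.
Qed.

Lemma wf_repair_subst (sg : subst_t F) t : wf F arity t ->
  wf_repair (subst F sg t) = subst F (fun x => wf_repair (sg x)) t.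
Proof.
  induction t as [x|f ts IH] using term_nested_ind; simpl; intros Ht; auto.
  inversion Ht as [|f' ts' Hlen Hts]; subst.
  rewrite length_map, Hlen, PeanoNat.Nat.eqb_refl. f_equal. rewrite map_map.
  apply map_ext_in. intros u Hu. rewrite Forall_forall in *. auto.
Qed.

Lemma is_instance_subst (t s : term F) (sg : subst_t F) :
  is_instance F t (subst F sg s) -> is_instance F t s.
Proof.
  intros [tau ->]. rewrite subst_comp. eexists. reflexivity.
Qed.

Lemma is_instance_Fn_neq f g (ts ss : list (term F)) :
  f <> g -> ~ is_instance F (Fn f ts) (Fn g ss).
Proof.
  intros Hfg [tau Heq]. injection Heq. auto.
Qed.

Lemma is_instance_Fn_nth f (ts ss : list (term F)) i t0 s0 :
  length ss = length ts -> i < length ss ->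
  is_instance F (Fn f ts) (Fn f ss) -> is_instance F (nth i ts t0) (nth i ss s0).
Proof.
  intros Hlen Hi [tau Heq]. injection Heq as Hts. exists tau.
  rewrite Hts, (nth_indep _ _ (subst F tau s0)) by (rewrite length_map; assumption).
  apply map_nth.
Qed.

End Terms.

Section Atoms.

Variable F : Type.
Variable arity : F -> nat.
Variable Pred : Type.

Lemma subst_atom_comp (f g : subst_t F) (a : atom F Pred) :
  subst_atom F Pred f (subst_atom F Pred g a)
  = subst_atom F Pred (fun x => subst F f (g x)) a.
Proof. unfold subst_atom. simpl. rewrite subst_comp. reflexivity. Qed.

Lemma map_subst_atom_comp (f g : subst_t F) (l : list (atom F Pred)) :
  map (subst_atom F Pred f) (map (subst_atom F Pred g) l)
  = map (subst_atom F Pred (fun x => subst F f (g x))) l.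
Proof. rewrite map_map. apply map_ext. apply subst_atom_comp. Qed.

(* A most general unifier factors the unifier [wf_repair o sg], and a substitution
   cannot repair an arity mismatch. *)
Lemma mgu_wf sg (A B : atom F Pred) :
  wf F arity (snd A) -> wf F arity (snd B) ->
  is_mgu F Pred sg A B -> forall x, wf F arity (sg x).
Proof.
  intros HA HB [Hunif Hmost] x.
  destruct (Hmost (fun y => wf_repair F arity (sg y))) as [tau Htau].
  - unfold subst_atom in *. simpl in *. injection Hunif as HP Ht.
    rewrite <- (wf_repair_subst F arity sg (snd A)), <- (wf_repair_subst F arity sg (snd B))
      by assumption.
    rewrite HP, Ht. reflexivity.
  - apply (wf_subst_inv F arity tau). rewrite <- Htau. apply wf_repair_wf.
Qed.

End Atoms.

Section Constraints.

Variable F : Type.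
Variable arity : F -> nat.

Definition grounding (dl : subst_t F) : Prop := forall x, grounds_var F arity dl x.

Lemma grounding_comp (d sg : subst_t F) :
  grounding d -> (forall x, wf F arity (sg x)) -> grounding (fun x => subst F d (sg x)).
Proof.
  intros Hd Hsg x. split.
  - apply ground_subst. intros y. apply Hd.
  - apply wf_subst; [intros y; apply Hd | apply Hsg].
Qed.

Lemma solution_Conj (dl : subst_t F) l : grounding dl ->
  (forall t s, In (t, s) l -> ~ is_instance F (subst F dl t) s) ->
  solution F arity (Conj F l) dl.
Proof. intros Hdl Hl. split; auto. Qed.

Lemma solution_norm_step dl pi pi' : grounding dl -> norm_step F pi pi' ->
  solution F arity pi' dl -> solution F arity pi dl.
Proof.
  intros Hdl Hstep Hsol.
  destruct Hstep as [| | l f ts ss rho i t0 s0 Hlen Hi _ Hp | l f ts g ss rho Hfg Hp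
                    | l x s th rho Hp]; try contradiction.
  all: destruct Hsol as [_ Hsol]; apply solution_Conj; [assumption|].
  all: intros t s' Hin; apply (Permutation_in _ Hp) in Hin.
  - destruct Hin as [[= <- <-] | Hin]; [|apply Hsol; right; assumption].
    intros Hinst. apply (Hsol (nth i ts t0) (nth i ss s0)); [left; reflexivity|].
    rewrite <- (map_nth (subst F dl)).
    apply (is_instance_Fn_nth F f); [rewrite length_map | |]; assumption.
  - destruct Hin as [[= <- <-] | Hin]; [apply is_instance_Fn_neq; assumption|].
    apply Hsol. assumption.
  - destruct Hin as [[= <- <-] | [[= <- <-] | Hin]].
    + apply Hsol. left. reflexivity.
    + intros Hinst. apply (Hsol (Var x) s); [left; reflexivity|].
      exact (is_instance_subst F _ _ _ Hinst).
    + apply Hsol. right. assumption.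
Qed.

Lemma solution_norm dl pi pi' : grounding dl ->
  clos_refl_trans (sdc F) (norm_step F) pi pi' ->
  solution F arity pi' dl -> solution F arity pi dl.
Proof.
  intros Hdl Hpi. induction Hpi; eauto using solution_norm_step.
Qed.

Lemma solution_sdc_subst (d sg : subst_t F) pi :
  grounding (fun x => subst F d (sg x)) ->
  solution F arity (sdc_subst F sg pi) d ->
  solution F arity pi (fun x => subst F d (sg x)).
Proof.
  intros He Hsol. destruct pi as [|l]; [contradiction|].
  destruct Hsol as [_ Hsol]. apply solution_Conj; [assumption|].
  intros t s Hin. rewrite <- subst_comp.
  apply (Hsol (subst F sg t) s). apply in_map_iff. exists (t, s). auto.
Qed.

Lemma solution_sdc_and dl p1 p2 :
  solution F arity (sdc_and F p1 p2) dl -> solution F arity p1 dl /\ solution F arity p2 dl.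
Proof.
  destruct p1 as [|l1], p2 as [|l2]; simpl; try contradiction.
  intros [Hgr Hsol]. split; split.
  1, 3: intros x (t & s & Hin & Hx); apply Hgr; exists t, s; split; auto using in_or_app.
  all: intros t s Hin; apply Hsol; auto using in_or_app.
Qed.

Variable c : F.
Hypothesis c_const : arity c = 0.

Definition ground_completion (dl : subst_t F) : subst_t F := fun x =>
  if excluded_middle_informative (grounds_var F arity dl x) then dl x else Fn c [].

Lemma grounding_completion dl : grounding (ground_completion dl).
Proof.
  intros x. unfold grounds_var, ground_completion.
  destruct (excluded_middle_informative _) as [Hx|_]; [assumption|]. split.
  - intros y Hy. inversion Hy as [|f ts u Hin]. destruct Hin.
  - constructor; [rewrite c_const; reflexivity | constructor].
Qed.

Lemma ground_completion_eq dl x :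
  grounds_var F arity dl x -> ground_completion dl x = dl x.
Proof.
  intros Hx. unfold ground_completion.
  destruct (excluded_middle_informative _); tauto.
Qed.

Lemma solution_completion dl pi :
  solution F arity pi dl -> solution F arity pi (ground_completion dl).
Proof.
  intros Hsol. destruct pi as [|l]; [contradiction|].
  destruct Hsol as [Hgr Hsol]. apply solution_Conj; [apply grounding_completion|].
  intros t s Hin. rewrite (subst_ext F _ dl); [apply Hsol; assumption|].
  intros x Hx. apply ground_completion_eq, Hgr. exists t, s. auto.
Qed.

Lemma subst_clause_completion (Pred : Type) dl (C : clause F Pred) :
  (forall x, occurs_clause F Pred x C -> grounds_var F arity dl x) ->
  subst_clause F Pred (ground_completion dl) C = subst_clause F Pred dl C.
Proof.
  intros Hgr. unfold subst_clause. f_equal; apply map_ext_in; intros a Ha;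
    unfold subst_atom; f_equal; apply subst_ext; intros x Hx;
    apply ground_completion_eq, Hgr; exists a; auto.
Qed.

End Constraints.

Section GroundClauses.

Variable F : Type.
Variable Pred : Type.
Variable I : interp F Pred.

Lemma sat_ground_perm (G G' D D' : list (atom F Pred)) :
  Permutation G G' -> Permutation D D' -> sat_ground F Pred I (G, D) ->
  sat_ground F Pred I (G', D').
Proof.
  intros HG HD [(a & Ha & Ia) | Hneg]; [left | right].
  - exists a. split; [apply (Permutation_in _ HD) |]; assumption.
  - intros Hall. apply Hneg. intros a Ha. apply Hall.
    apply (Permutation_in _ HG). assumption.
Qed.

Lemma sat_ground_resolve (G1 D1 G2 D2 : list (atom F Pred)) A :
  sat_ground F Pred I (G1, A :: D1) -> sat_ground F Pred I (A :: G2, D2) ->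
  sat_ground F Pred I (G1 ++ G2, D1 ++ D2).
Proof.
  unfold sat_ground; simpl. intros H1 H2.
  destruct (classic (forall a, In a (G1 ++ G2) -> I a)) as [Hall | Hneg]; [left | auto].
  destruct H1 as [(a & [<- | Ha] & Ia) | H1].
  - destruct H2 as [(b & Hb & Ib) | H2].
    + exists b. auto using in_or_app.
    + exfalso. apply H2. intros b [<- | Hb]; auto using in_or_app.
  - exists a. auto using in_or_app.
  - exfalso. auto using in_or_app.
Qed.

Lemma sat_ground_factor (G D : list (atom F Pred)) A :
  sat_ground F Pred I (G, A :: A :: D) -> sat_ground F Pred I (G, A :: D).
Proof.
  intros [(a & Ha & Ia) | Hneg]; [left | right; assumption].
  exists a. split; [|assumption]. destruct Ha as [<- | Ha]; simpl; auto.
Qed.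

End GroundClauses.

Section Soundness.

Variable F : Type.
Variable arity : F -> nat.
Variable Pred : Type.
Variable c : F.
Hypothesis c_const : arity c = 0.

Lemma ground_instance_lift (R : clause F Pred) pR pi sg dl :
  norm_of F (sdc_subst F sg pi) pR -> (forall x, wf F arity (sg x)) ->
  solution F arity pR dl -> (forall x, occurs_clause F Pred x R -> grounds_var F arity dl x) ->
  exists d0, subst_clause F Pred dl R = subst_clause F Pred d0 R /\
    grounding F arity (fun x => subst F d0 (sg x)) /\
    solution F arity pi (fun x => subst F d0 (sg x)).
Proof.
  intros [Hnorm _] Hsg Hsol HR.
  set (d0 := ground_completion F arity c dl).
  assert (Hd0 : grounding F arity d0) by (apply grounding_completion; assumption).
  assert (He : grounding F arity (fun x => subst F d0 (sg x)))
    by (apply grounding_comp; assumption).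
  exists d0. split; [symmetry; apply subst_clause_completion; assumption|]. split; [assumption|].
  apply solution_sdc_subst; [assumption|].
  apply (solution_norm F arity _ _ _ Hd0 Hnorm), solution_completion; assumption.
Qed.

Lemma sdc_resolution_sound lt C1 p1 C2 p2 (R : clause F Pred) pR :
  cclause_wf F arity Pred C1 p1 -> cclause_wf F arity Pred C2 p2 ->
  sdc_resolution F arity Pred lt C1 p1 C2 p2 R pR ->
  forall I, satisfies F arity Pred I C1 p1 -> satisfies F arity Pred I C2 p2 ->
  satisfies F arity Pred I R pR.
Proof.
  intros [_ [W1 _]] [_ [W2 _]] Hres I S1 S2 dl Hsol HR.
  destruct Hres as (G1 & D1 & A & G2 & D2 & B & sg & _ & P1 & P2 & P3 & P4 & Hmgu
                    & PR1 & PR2 & Hnorm & _).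
  assert (Hsg : forall x, wf F arity (sg x)).
  { apply (mgu_wf F arity Pred sg A B); [apply W1; right | apply W2; left | exact Hmgu];
      (eapply Permutation_in; [symmetry; eassumption | left; reflexivity]). }
  destruct (ground_instance_lift R pR _ sg dl Hnorm Hsg Hsol HR) as (d0 & -> & He & Hsole).
  set (e := fun x => subst F d0 (sg x)) in *.
  assert (HAB : subst_atom F Pred e A = subst_atom F Pred e B).
  { unfold e. rewrite <- !subst_atom_comp, (proj1 Hmgu). reflexivity. }
  destruct (solution_sdc_and F arity _ _ _ Hsole) as [Hsol1 Hsol2].
  specialize (S1 e Hsol1 (fun x _ => He x)).
  specialize (S2 e Hsol2 (fun x _ => He x)).
  unfold subst_clause in *; cbn [fst snd] in *.
  apply (sat_ground_perm F Pred I (map (subst_atom F Pred e) (G1 ++ G2)) _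
                                  (map (subst_atom F Pred e) (D1 ++ D2)));
    [unfold e; rewrite <- map_subst_atom_comp; symmetry; apply Permutation_map; assumption ..|].
  rewrite !map_app. apply sat_ground_resolve with (subst_atom F Pred e A).
  - apply (sat_ground_perm F Pred I _ _ _ _ (Permutation_map _ P1) (Permutation_map _ P2) S1).
  - rewrite HAB.
    apply (sat_ground_perm F Pred I _ _ _ _ (Permutation_map _ P3) (Permutation_map _ P4) S2).
Qed.

Lemma sdc_factoring_sound lt C p (R : clause F Pred) pR :
  cclause_wf F arity Pred C p -> sdc_factoring F arity Pred lt C p R pR ->
  forall I, satisfies F arity Pred I C p -> satisfies F arity Pred I R pR.
Proof.
  intros [_ [W _]] Hfac I S dl Hsol HR.
  destruct Hfac as (G & D & A & B & sg & P1 & P2 & Hmgu & PR1 & PR2 & _ & _ & Hnorm & _).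
  assert (Hsg : forall x, wf F arity (sg x)).
  { apply (mgu_wf F arity Pred sg A B); [apply W; right .. | exact Hmgu];
      (eapply Permutation_in; [symmetry; eassumption | simpl; auto]). }
  destruct (ground_instance_lift R pR _ sg dl Hnorm Hsg Hsol HR) as (d0 & -> & He & Hsole).
  set (e := fun x => subst F d0 (sg x)) in *.
  assert (HAB : subst_atom F Pred e A = subst_atom F Pred e B).
  { unfold e. rewrite <- !subst_atom_comp, (proj1 Hmgu). reflexivity. }
  specialize (S e Hsole (fun x _ => He x)).
  unfold subst_clause in *; cbn [fst snd] in *.
  apply (sat_ground_perm F Pred I (map (subst_atom F Pred e) G) _
                                  (map (subst_atom F Pred e) (A :: D)));
    [unfold e; rewrite <- map_subst_atom_comp; symmetry; apply Permutation_map; assumption ..|].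
  apply sat_ground_factor.
  apply (sat_ground_perm F Pred I _ _ _ _ (Permutation_map _ P1) (Permutation_map _ P2)) in S.
  simpl in S. rewrite <- HAB in S. exact S.
Qed.

End Soundness.

Theorem lemma1 (F : Type) (arity : F -> nat) (Pred : Type)
  (Hconst : exists c : F, arity c = 0)
  (lt : atom F Pred -> atom F Pred -> Prop)
  (Hlt : atom_ordering F arity Pred lt) :
  (forall (C1 : clause F Pred) (p1 : sdc F) (C2 : clause F Pred) (p2 : sdc F)
          (R : clause F Pred) (pR : sdc F),
     cclause_wf F arity Pred C1 p1 -> cclause_wf F arity Pred C2 p2 ->
     sdc_resolution F arity Pred lt C1 p1 C2 p2 R pR ->
     forall I : interp F Pred,
       satisfies F arity Pred I C1 p1 -> satisfies F arity Pred I C2 p2 ->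
       satisfies F arity Pred I R pR) /\
  (forall (C : clause F Pred) (p : sdc F) (R : clause F Pred) (pR : sdc F),
     cclause_wf F arity Pred C p ->
     sdc_factoring F arity Pred lt C p R pR ->
     forall I : interp F Pred,
       satisfies F arity Pred I C p -> satisfies F arity Pred I R pR).
Proof.
  destruct Hconst as [c Hc]. split.
  - exact (sdc_resolution_sound F arity Pred c Hc lt).
  - exact (sdc_factoring_sound F arity Pred c Hc lt).
Qed.
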